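(* Under the hypotheses of Theorem 2 (stated in the context), every limit point of the trial sequence $\{x^q\}$ generated by PLT is a global minimizer of $f$ on $[0,1]$.
   Context: Algorithm PLT (parallel information algorithm with local tuning) for minimizing $f$ on $[0,1]$; parameters: integer $N\ge1$, reliability parameter $r>1$, small number $\xi>0$. A ''trial'' is an evaluation of $f$ at a point. Step 0: perform $q(1)>1$ initial trials at $x^1=0$, $x^2=1$ and some interior points $x^3,\dots,x^{q(1)}\in(0,1)$; set $l=1$. At iteration $l$, let $q=q(l)$ be the number of trials made so far. Step 1: order all trial points as $0=x_1<x_2<\dots<x_q=1$ and set $z_i=f(x_i)$. Step 2: for $2\le j\le q$ compute $\mu_j=\max\{\lambda_j,\gamma_j,\xi\}$, where $\lambda_j=\max\{|z_i-z_{i-1}|/(x_i-x_{i-1})^{1/N}: i\in I_j\}$ with $I_2=\{2,3\}$, $I_j=\{j-1,j,j+1\}$ for $3\le j\le q-1$, $I_q=\{q-1,q\}$; and $\gamma_j=\mu\,(x_j-x_{j-1})^{1/N}/(X^{\max})^{1/N}$ with $\mu=\max\{|z_i-z_{i-1}|/(x_i-x_{i-1})^{1/N}:2\le i\le q\}$ and $X^{\max}=\max\{x_i-x_{i-1}:2\le i\le q\}$. Step 3: for $2\le j\le q$ compute the characteristic $R(j)=r\mu_j(x_j-x_{j-1})^{1/N}+\frac{(z_j-z_{j-1})^2}{r\mu_j(x_j-x_{j-1})^{1/N}}-(z_j+z_{j-1})$. Step 4: choose $p=p(l+1)\le q(l)-1$ and distinct indices $t_1,\dots,t_p$ being the indices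 of the $p$ largest characteristics ($t_1=\arg\max\{R(i):1<i\le q\}$, $t_k=\arg\max\{R(i):1<i\le q,\ i\ne t_s, 1\le s\le k-1\}$); the new trial points are $x^{q+k}=\tfrac12(x_{t_k-1}+x_{t_k})-\frac{1}{2r}\left(\frac{|z_{t_k}-z_{t_k-1}|}{\mu_{t_k}}\right)^N\operatorname{sign}(z_{t_k}-z_{t_k-1})$, $1\le k\le p$. Step 5: evaluate $f$ at these $p$ points in parallel, set $q(l+1)=q(l)+p(l+1)$, $l\leftarrow l+1$, and return to Step 1. Hypotheses of Theorem 2: $f:[0,1]\to\mathbb R$ satisfies $|f(x')-f(x'')|\le H|x'-x''|^{1/N}$; PLT runs indefinitely (stopping rule disregarded) producing trial points $\{x^q\}$; $p(l)\le Q<\infty$ for all $l>1$; $x^*$ is a global minimizer of $f$; for each iteration $l$, $j=j(l)$ indexes an interval $[x_{j-1},x_j]$ containing $x^*$, with $K_j=\max\{(z_{j-1}-f(x^* ))(x^*-x_{j-1})^{-1/N},(z_j-f(x^* ))(x_j-x^* )^{-1/N}\}$ and $M_j=|z_{j-1}-z_j|(x_j-x_{j-1})^{-1/N}$; and there is an infinite set of iteration numbers $\{h\}$ such that for all $l\in\{h\}$, $4^{1-1/N}K_j^2\ge M_j^2$ and $r\mu_j\ge 2^{1-1/N}K_j+(4^{1-1/N}K_j^2-M_j^2)^{1/2}$. *)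

From Stdlib Require Import Reals Lra Lia Arith List.
Import ListNotations.
Open Scope R_scope.

(* a^(1/N) for a > 0; 0 otherwise (so 0^(1/N) = 0). *)
Definition rt (N : nat) (a : R) : R :=
  if Rlt_dec 0 a then Rpower a (/ INR N) else 0.

Definition sgn (a : R) : R :=
  if Rlt_dec 0 a then 1 else if Rlt_dec a 0 then -1 else 0.

(* maximum of a finite list of nonnegative reals (0 for the empty list) *)
Definition maxl (l : list R) : R := fold_right Rmax 0 l.

(* indices 2..q of the intervals [x_{i-1}, x_i] *)
Definition idx (q : nat) : list nat := seq 2 (q - 1).

(* In what follows, x : nat -> R is the ordered list x_1 < ... < x_q of
   trial points at the current iteration (1-indexed), and z_i = f (x i). *)

Definition slope (N : nat) (f : R -> R) (x : nat -> R) (i : nat) : R :=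
  Rabs (f (x i) - f (x (i - 1)%nat)) / rt N (x i - x (i - 1)%nat).

Definition Iset (q j : nat) : list nat :=
  filter (fun i => andb (Nat.leb (j - 1) i) (Nat.leb i (j + 1))) (idx q).

Definition lam (N : nat) (f : R -> R) (x : nat -> R) (q j : nat) : R :=
  maxl (map (slope N f x) (Iset q j)).

Definition mu_all (N : nat) (f : R -> R) (x : nat -> R) (q : nat) : R :=
  maxl (map (slope N f x) (idx q)).

Definition Xmax (x : nat -> R) (q : nat) : R :=
  maxl (map (fun i => x i - x (i - 1)%nat) (idx q)).

Definition gam (N : nat) (f : R -> R) (x : nat -> R) (q j : nat) : R :=
  mu_all N f x q * rt N (x j - x (j - 1)%nat) / rt N (Xmax x q).

Definition muj (N : nat) (xi : R) (f : R -> R) (x : nat -> R) (q j : nat) : R :=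
  Rmax (Rmax (lam N f x q j) (gam N f x q j)) xi.

Definition charR (N : nat) (r xi : R) (f : R -> R) (x : nat -> R) (q j : nat) : R :=
  let m := muj N xi f x q j in
  let d := rt N (x j - x (j - 1)%nat) in
  r * m * d + (f (x j) - f (x (j - 1)%nat)) ^ 2 / (r * m * d)
  - (f (x j) + f (x (j - 1)%nat)).

Definition newpt (N : nat) (r xi : R) (f : R -> R) (x : nat -> R) (q t : nat) : R :=
  (x (t - 1)%nat + x t) / 2
  - / (2 * r) * (Rabs (f (x t) - f (x (t - 1)%nat)) / muj N xi f x q t) ^ N
    * sgn (f (x t) - f (x (t - 1)%nat)).

(* An infinite run of PLT (stopping rule disregarded).
   xt k  = trial point x^k (k >= 1);
   q l   = q(l), number of trials made before iteration l (l >= 1);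
   p l   = p(l), number of new trials made at step l-1 -> l (l > 1);
   xs l i = i-th smallest trial point x_i at iteration l (1 <= i <= q l);
   t l k = index t_k chosen at iteration l (1 <= k <= p (l+1)). *)
Definition PLT_run (f : R -> R) (N : nat) (r xi : R) (xt : nat -> R)
    (q p : nat -> nat) (xs : nat -> nat -> R) (t : nat -> nat -> nat) : Prop :=
  (1 < q 1)%nat /\ xt 1%nat = 0 /\ xt 2%nat = 1 /\
  (forall k, (3 <= k <= q 1)%nat -> 0 < xt k < 1) /\
  forall l, (1 <= l)%nat ->
    (forall i, (1 <= i < q l)%nat -> xs l i < xs l (S i)) /\
    (forall i, (1 <= i <= q l)%nat -> exists k, (1 <= k <= q l)%nat /\ xs l i = xt k) /\
    (forall k, (1 <= k <= q l)%nat -> exists i, (1 <= i <= q l)%nat /\ xs l i = xt k) /\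
    (* Step 4: choice of the p(l+1) largest characteristics *)
    (1 <= p (S l) <= q l - 1)%nat /\
    (forall k, (1 <= k <= p (S l))%nat -> (2 <= t l k <= q l)%nat) /\
    (forall k k', (1 <= k <= p (S l))%nat -> (1 <= k' <= p (S l))%nat ->
       t l k = t l k' -> k = k') /\
    (forall k k', (1 <= k)%nat -> (k < k')%nat -> (k' <= p (S l))%nat ->
       charR N r xi f (xs l) (q l) (t l k') <= charR N r xi f (xs l) (q l) (t l k)) /\
    (forall k j, (1 <= k <= p (S l))%nat -> (2 <= j <= q l)%nat ->
       (forall k', (1 <= k' <= p (S l))%nat -> t l k' <> j) ->
       charR N r xi f (xs l) (q l) j <= charR N r xi f (xs l) (q l) (t l k)) /\
    (forall k, (1 <= k <= p (S l))%nat ->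
       xt (q l + k)%nat = newpt N r xi f (xs l) (q l) (t l k)) /\
    q (S l) = (q l + p (S l))%nat.

Definition is_global_min (f : R -> R) (y : R) : Prop :=
  0 <= y <= 1 /\ forall x, 0 <= x <= 1 -> f y <= f x.

Definition limit_point (xt : nat -> R) (y : R) : Prop :=
  forall eps, 0 < eps -> forall n, exists k, (n <= k)%nat /\ (1 <= k)%nat /\ Rabs (xt k - y) < eps.

Definition Kj (N : nat) (f : R -> R) (x : nat -> R) (xstar : R) (j : nat) : R :=
  Rmax ((f (x (j - 1)%nat) - f xstar) / rt N (xstar - x (j - 1)%nat))
       ((f (x j) - f xstar) / rt N (x j - xstar)).

Definition Mj (N : nat) (f : R -> R) (x : nat -> R) (j : nat) : R :=
  Rabs (f (x (j - 1)%nat) - f (x j)) / rt N (x j - x (j - 1)%nat).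

(* Suppose [f] is Hölder with exponent [1/N], PLT makes at most [Q] trials
   per iteration, and at infinitely many iterations the interval containing
   a global minimizer [xstar] satisfies the condition of Theorem 2.  The
   characteristic [R(j)] of an interval lies between [-2 min z] and
   [-2 min z + r mu_j d^(1/N)], where [min z] is its smaller endpoint value;
   under the condition of Theorem 2 the interval containing [xstar] has
   [R >= -2 f(xstar)].  Every new trial keeps a fixed fraction of its
   interval's length away from all earlier trials, so subdivided intervals
   eventually become short.  If a limit point [y] had [f(y) > f(xstar)],
   then near [y] intervals with characteristic below [-2 f(xstar)] would be
   chosen arbitrarily late, while the condition of Theorem 2 yields, at
   infinitely many iterations, new points with values close to [f(xstar)];
   at a late iteration all [Q + 1] intervals around such points would have to
   be chosen, contradicting [p <= Q]. *)

From Stdlib Require Import Reals Lra Lia List ClassicalEpsilon Classical ZArith.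
Open Scope R_scope.

Lemma rt_ge0 N a : 0 <= rt N a.
Proof. unfold rt. destruct (Rlt_dec 0 a); [left; apply exp_pos | lra]. Qed.

Lemma rt_pos N a : 0 < a -> 0 < rt N a.
Proof. intros Ha. unfold rt. destruct (Rlt_dec 0 a); [apply exp_pos | lra]. Qed.

Lemma rt0 N : rt N 0 = 0.
Proof. unfold rt. destruct (Rlt_dec 0 0); lra. Qed.

Lemma rt_mono N a b : (1 <= N)%nat -> 0 <= a <= b -> rt N a <= rt N b.
Proof.
  intros HN [Ha Hab]. unfold rt.
  destruct (Rlt_dec 0 a), (Rlt_dec 0 b); try lra.
  - apply Rle_Rpower_l; [|lra]. left; apply Rinv_0_lt_compat, lt_0_INR; lia.
  - left; apply exp_pos.
Qed.

Lemma rt_powN N d : (1 <= N)%nat -> 0 < d -> rt N d ^ N = d.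
Proof.
  intros HN Hd. unfold rt. destruct (Rlt_dec 0 d); [|lra].
  rewrite <- Rpower_pow by apply exp_pos.
  rewrite Rpower_mult, Rinv_l by (apply not_0_INR; lia). apply Rpower_1; lra.
Qed.

Lemma rt_of_pow N E : (1 <= N)%nat -> 0 < E -> rt N (E ^ N) = E.
Proof.
  intros HN HE. unfold rt. destruct (Rlt_dec 0 (E ^ N)) as [_|Hn].
  - rewrite <- Rpower_pow by lra.
    rewrite Rpower_mult, Rinv_r by (apply not_0_INR; lia). apply Rpower_1; lra.
  - exfalso; apply Hn, pow_lt; lra.
Qed.

Lemma rt_small N K eps : (1 <= N)%nat -> 0 < eps ->
  exists L, 0 < L /\ forall z, 0 <= z <= L -> K * rt N z < eps.
Proof.
  intros HN Heps.
  set (E := eps / (Rabs K + 1)).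
  assert (HE : 0 < E) by (apply Rdiv_lt_0_compat; pose proof (Rabs_pos K); lra).
  assert (HKE : Rabs K * E < eps).
  { assert (E * (Rabs K + 1) = eps) by (unfold E; field; pose proof (Rabs_pos K); lra).
    nra. }
  exists (E ^ N). split; [apply pow_lt; lra|].
  intros z Hz.
  assert (Hrt : rt N z <= E) by (rewrite <- (rt_of_pow N E HN HE); apply rt_mono; [exact HN | lra]).
  pose proof (rt_ge0 N z). pose proof (Rle_abs K). pose proof (Rabs_pos K).
  apply Rle_lt_trans with (Rabs K * E); [|exact HKE].
  apply Rle_trans with (Rabs K * rt N z); [apply Rmult_le_compat_r | apply Rmult_le_compat_l]; lra.
Qed.

Lemma Rabs_le_between a b : Rabs a <= b -> - b <= a <= b.
Proof.
  intros Hab. pose proof (Rle_abs a). pose proof (Rle_abs (- a)).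
  rewrite Rabs_Ropp in *. lra.
Qed.

Lemma quad_char_bounds a D : 0 < a -> Rabs D <= a ->
  Rabs D < a + D ^ 2 / a /\ a + D ^ 2 / a <= a + Rabs D.
Proof.
  intros Ha HD.
  assert (Hsq : D ^ 2 = Rabs D * Rabs D).
  { rewrite <- Rabs_mult, Rabs_right; [ring|]. apply Rle_ge, Rle_0_sqr. }
  assert (HDa : D ^ 2 / a * a = D ^ 2) by (field; lra).
  pose proof (Rabs_pos D).
  split; [apply Rmult_lt_reg_r with a | apply Rmult_le_reg_r with a]; auto;
    rewrite ?Rmult_plus_distr_r, HDa, Hsq; nra.
Qed.

(* A point beyond the larger root [b + w] of [X^2 - 2bX + c] (where
   [w^2 = b^2 - c]) is not below the parabola's zero level. *)
Lemma above_larger_root a b c w : 0 <= w -> w * w = b * b - c -> b + w <= a ->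
  0 <= a * a - 2 * b * a + c.
Proof.
  intros Hw Hwc Ha.
  replace (a * a - 2 * b * a + c) with ((a - b - w) * (a - b + w)) by nra.
  apply Rmult_le_pos; lra.
Qed.

Lemma reliability_bound a dl s K M : 0 < dl -> 0 <= K -> 1 <= s ->
  M ^ 2 <= s * s * K ^ 2 -> 0 < a ->
  dl * (s * K + sqrt (s * s * K ^ 2 - M ^ 2)) <= a ->
  2 * (K * dl) <= a + M ^ 2 * dl ^ 2 / a.
Proof.
  intros Hdl HK Hs HMK Ha Hrel.
  set (w := sqrt (s * s * K ^ 2 - M ^ 2)) in *.
  assert (Hw0 : 0 <= w) by apply sqrt_pos.
  assert (Hw2 : w * w = s * s * K ^ 2 - M ^ 2) by (apply sqrt_sqrt; lra).
  (* [a] lies beyond the larger root of [X^2 - 2 s K dl X + M^2 dl^2] *)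
  assert (Hroot : 0 <= a * a - 2 * (s * K * dl) * a + M ^ 2 * dl ^ 2).
  { apply (above_larger_root a (s * K * dl) (M ^ 2 * dl ^ 2) (dl * w)).
    - apply Rmult_le_pos; lra.
    - transitivity (dl * dl * (w * w)); [ring | rewrite Hw2; ring].
    - nra. }
  assert (K * dl <= s * K * dl) by (assert (0 <= K * dl) by nra; nra).
  assert (2 * (s * K * dl) - a <= M ^ 2 * dl ^ 2 / a); [|lra].
  apply Rmult_le_reg_r with a; auto.
  replace (M ^ 2 * dl ^ 2 / a * a) with (M ^ 2 * dl ^ 2) by (field; lra). nra.
Qed.

Lemma root_exponent_factor N : (1 <= N)%nat ->
  1 <= Rpower 2 (1 - / INR N) /\
  Rpower 4 (1 - / INR N) = Rpower 2 (1 - / INR N) * Rpower 2 (1 - / INR N).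
Proof.
  intros HN.
  assert (He : 0 <= 1 - / INR N).
  { assert (/ INR N <= 1); [|lra].
    rewrite <- Rinv_1. apply Rinv_le_contravar; [lra | apply (le_INR 1); exact HN]. }
  split.
  - rewrite <- (Rpower_O 2) at 1 by lra. apply Rle_Rpower; lra.
  - rewrite Rpower_mult_distr by lra. f_equal; ring.
Qed.

Lemma maxl_ge l x : In x l -> x <= maxl l.
Proof.
  induction l as [|a l IH]; simpl; [tauto|]. intros [<-|Hx].
  - apply Rmax_l.
  - eapply Rle_trans; [apply IH, Hx | apply Rmax_r].
Qed.

Lemma maxl_le l B : 0 <= B -> (forall x, In x l -> x <= B) -> maxl l <= B.
Proof. induction l; simpl; intros H0 H; auto. apply Rmax_lub; auto. Qed.

Lemma maxl_ge0 l : 0 <= maxl l.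
Proof. induction l; simpl; [lra | eapply Rle_trans; [eassumption | apply Rmax_r]]. Qed.

Lemma pigeon (M p : nat) (P : nat -> nat -> Prop) :
  (forall m, (m < M)%nat -> exists k, (1 <= k <= p)%nat /\ P m k) ->
  (forall m m' k, (m < M)%nat -> (m' < M)%nat -> P m k -> P m' k -> m = m') ->
  (M <= p)%nat.
Proof.
  intros Hex Hinj.
  set (g := fun m => match lt_dec m M with
                     | left h => proj1_sig (constructive_indefinite_description _ (Hex m h))
                     | right _ => 0%nat end).
  assert (Hg : forall m, (m < M)%nat -> (1 <= g m <= p)%nat /\ P m (g m)).
  { intros m hm. unfold g. destruct (lt_dec m M) as [h|]; [|lia].
    destruct (constructive_indefinite_description _ (Hex m h)); simpl; auto. }
  assert (ND : NoDup (map g (seq 0 M))).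
  { apply NoDup_map_NoDup_ForallPairs; [|apply seq_NoDup].
    intros a b Ha Hb E. apply in_seq in Ha, Hb.
    destruct (Hg a) as [_ Pa]; [lia|]. destruct (Hg b) as [_ Pb]; [lia|].
    rewrite E in Pa. apply (Hinj a b (g b)); auto; lia. }
  assert (Inc : incl (map g (seq 0 M)) (seq 1 p)).
  { intros x Hx. apply in_map_iff in Hx. destruct Hx as [m [<- Hm]].
    apply in_seq in Hm. destruct (Hg m) as [Hb _]; [lia|]. apply in_seq; lia. }
  pose proof (NoDup_incl_length ND Inc) as Hlen.
  rewrite length_map, !length_seq in Hlen. exact Hlen.
Qed.

Lemma increasing_witnesses (P : nat -> Prop) :
  (forall n, exists l, (n <= l)%nat /\ P l) ->
  exists s : nat -> nat, (forall m, P (s m)) /\ (forall m m', (m < m')%nat -> (s m < s m')%nat).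
Proof.
  intros Hinf.
  set (nxt := fun n => proj1_sig (constructive_indefinite_description _ (Hinf n))).
  assert (Hnxt : forall n, (n <= nxt n)%nat /\ P (nxt n)).
  { intros n. unfold nxt. destruct (constructive_indefinite_description _ (Hinf n)); auto. }
  exists (fix s m := match m with O => nxt O | S m' => nxt (S (s m')) end).
  split.
  - intros [|m]; apply Hnxt.
  - intros m m' Hmm. induction Hmm as [|m' _ IH];
      [|eapply Nat.lt_trans; [exact IH|]]; apply Hnxt.
Qed.

Definition cell (g x : R) : nat := Z.to_nat (up (x / g)).

Lemma cell_range g x : 0 < g -> 0 <= x <= 1 -> (1 <= cell g x <= cell g 1)%nat.
Proof.
  intros Hg Hx. unfold cell.
  destruct (archimed (x / g)) as [A1 A2]. destruct (archimed (1 / g)) as [B1 B2].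
  assert (0 <= x / g) by (apply Rmult_le_pos; [|left; apply Rinv_0_lt_compat]; lra).
  assert (x / g <= 1 / g) by (apply Rmult_le_compat_r; [left; apply Rinv_0_lt_compat|]; lra).
  assert (Z1 : (0 < up (x / g))%Z) by (apply lt_IZR; simpl; lra).
  assert (Z2 : (up (x / g) < up (1 / g) + 1)%Z) by (apply lt_IZR; rewrite plus_IZR; simpl; lra).
  lia.
Qed.

Lemma same_cell_close g x y : 0 < g -> 0 <= x <= 1 -> 0 <= y <= 1 ->
  cell g x = cell g y -> Rabs (x - y) < g.
Proof.
  intros Hg Hx Hy E. unfold cell in E.
  destruct (archimed (x / g)) as [A1 A2]. destruct (archimed (y / g)) as [B1 B2].
  assert (0 <= x / g) by (apply Rmult_le_pos; [|left; apply Rinv_0_lt_compat]; lra).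
  assert (0 <= y / g) by (apply Rmult_le_pos; [|left; apply Rinv_0_lt_compat]; lra).
  assert (Z1 : (0 < up (x / g))%Z) by (apply lt_IZR; simpl; lra).
  assert (Z2 : (0 < up (y / g))%Z) by (apply lt_IZR; simpl; lra).
  assert (E' : up (x / g) = up (y / g)) by lia. rewrite E' in A1, A2.
  assert (Hd : Rabs ((x - y) / g) < 1).
  { replace ((x - y) / g) with (x / g - y / g) by (field; lra). apply Rabs_def1; lra. }
  unfold Rdiv in Hd. rewrite Rabs_mult, (Rabs_right (/ g)) in Hd
    by (left; apply Rinv_0_lt_compat; lra).
  apply Rmult_lt_compat_r with (r := g) in Hd; auto.
  rewrite Rmult_assoc, Rinv_l in Hd; lra.
Qed.

Lemma no_separated_sequence (g : R) (s : nat -> R) : 0 < g ->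
  (forall m, 0 <= s m <= 1) ->
  (forall m m', (m < m')%nat -> g <= Rabs (s m - s m')) -> False.
Proof.
  intros Hg H01 Hsep.
  assert (Hp : (S (cell g 1) <= cell g 1)%nat).
  { apply (pigeon (S (cell g 1)) (cell g 1) (fun m k => k = cell g (s m))).
    - intros m _. exists (cell g (s m)). split; auto. apply cell_range; auto.
    - intros m m' k _ _ E1 E2. rewrite E1 in E2.
      apply same_cell_close in E2; auto.
      destruct (Nat.lt_total m m') as [Hlt|[Heq|Hgt]]; auto.
      + pose proof (Hsep m m' Hlt). lra.
      + pose proof (Hsep m' m Hgt). rewrite Rabs_minus_sym in E2. lra. }
  lia.
Qed.

Lemma limit_point_in01 (xt : nat -> R) y : (forall k, (1 <= k)%nat -> 0 <= xt k <= 1) ->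
  limit_point xt y -> 0 <= y <= 1.
Proof.
  intros H01 Hlp. split; apply Rnot_lt_le; intros Hy.
  - destruct (Hlp (- y) ltac:(lra) O) as (k & _ & Hk & Hclose).
    pose proof (H01 k Hk). apply Rabs_def2 in Hclose. lra.
  - destruct (Hlp (y - 1) ltac:(lra) O) as (k & _ & Hk & Hclose).
    pose proof (H01 k Hk). apply Rabs_def2 in Hclose. lra.
Qed.

Definition ordered01 (x : nat -> R) (q : nat) : Prop :=
  forall i, (2 <= i <= q)%nat ->
    0 < x i - x (i - 1)%nat /\ 0 <= x i <= 1 /\ 0 <= x (i - 1)%nat <= 1.

Section Characteristic.

Variables (N : nat) (r xi : R) (f : R -> R).
Hypothesis HN : (1 <= N)%nat.
Hypothesis Hr : 1 < r.
Hypothesis Hxi : 0 < xi.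

Lemma muj_ge_slope x q j : (2 <= j <= q)%nat -> slope N f x j <= muj N xi f x q j.
Proof.
  intros Hj. unfold muj, lam.
  eapply Rle_trans; [|apply Rmax_l]. eapply Rle_trans; [|apply Rmax_l].
  apply maxl_ge, in_map, filter_In. split.
  - apply in_seq; lia.
  - apply andb_true_intro; split; apply Nat.leb_le; lia.
Qed.

Lemma muj_pos x q j : 0 < muj N xi f x q j.
Proof. unfold muj. eapply Rlt_le_trans; [exact Hxi | apply Rmax_r]. Qed.

Lemma jump_le_muj x q j : (2 <= j <= q)%nat -> 0 < x j - x (j - 1)%nat ->
  Rabs (f (x j) - f (x (j - 1)%nat)) <= muj N xi f x q j * rt N (x j - x (j - 1)%nat).
Proof.
  intros Hj Hd. pose proof (muj_ge_slope x q j Hj) as Hs. unfold slope in Hs.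
  pose proof (rt_pos N _ Hd) as Hrt.
  apply Rmult_le_compat_r with (r := rt N (x j - x (j - 1)%nat)) in Hs; [|lra].
  unfold Rdiv in Hs. rewrite Rmult_assoc, Rinv_l in Hs; lra.
Qed.

Lemma newpt_margin x q t : (2 <= t <= q)%nat -> 0 < x t - x (t - 1)%nat ->
  x (t - 1)%nat + (1 - / r) / 2 * (x t - x (t - 1)%nat) <= newpt N r xi f x q t /\
  newpt N r xi f x q t <= x t - (1 - / r) / 2 * (x t - x (t - 1)%nat).
Proof.
  intros Ht Hd.
  set (d := x t - x (t - 1)%nat) in *.
  set (m := muj N xi f x q t).
  set (D := f (x t) - f (x (t - 1)%nat)).
  assert (Hm : 0 < m) by apply muj_pos.
  assert (HD : Rabs D <= m * rt N d) by apply (jump_le_muj x q t Ht Hd).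
  (* the shift [(|D|/m)^N] is at most the interval length [d] *)
  assert (HX0 : 0 <= Rabs D / m)
    by (apply Rmult_le_pos; [apply Rabs_pos | left; apply Rinv_0_lt_compat; lra]).
  assert (HX1 : Rabs D / m <= rt N d).
  { apply Rmult_le_reg_r with m; auto. unfold Rdiv. rewrite Rmult_assoc, Rinv_l; lra. }
  assert (HX : (Rabs D / m) ^ N <= d)
    by (rewrite <- (rt_powN N d HN Hd); apply pow_incr; auto).
  assert (HX' : 0 <= (Rabs D / m) ^ N) by (apply pow_le; auto).
  assert (Hsg : -1 <= sgn D <= 1)
    by (unfold sgn; destruct (Rlt_dec 0 D); [|destruct (Rlt_dec D 0)]; lra).
  assert (Hir : 0 < / r < 1).
  { split; [apply Rinv_0_lt_compat; lra|].
    rewrite <- Rinv_1. apply Rinv_lt_contravar; lra. }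
  unfold newpt. fold m D d.
  replace (/ (2 * r)) with (/ 2 * / r) by (field; lra).
  set (X := (Rabs D / m) ^ N) in *. set (ir := / r) in *.
  assert (Hb : - (ir * X) <= ir * X * sgn D <= ir * X).
  { assert (0 <= ir * X) by (apply Rmult_le_pos; lra). split; nra. }
  assert (ir * X <= ir * d) by nra.
  unfold d in *. split; nra.
Qed.

Lemma charR_bounds x q j : (2 <= j <= q)%nat -> 0 < x j - x (j - 1)%nat ->
  -2 * Rmin (f (x j)) (f (x (j - 1)%nat)) < charR N r xi f x q j /\
  charR N r xi f x q j
    <= r * muj N xi f x q j * rt N (x j - x (j - 1)%nat)
       - 2 * Rmin (f (x j)) (f (x (j - 1)%nat)).
Proof.
  intros Hj Hd.
  pose proof (jump_le_muj x q j Hj Hd) as HD.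
  pose proof (muj_pos x q j) as Hm. pose proof (rt_pos N _ Hd) as Hrt.
  unfold charR.
  set (m := muj N xi f x q j) in *. set (e := rt N (x j - x (j - 1)%nat)) in *.
  set (A := f (x j)) in *. set (B := f (x (j - 1)%nat)) in *.
  assert (Ha : 0 < r * m * e) by (apply Rmult_lt_0_compat; [apply Rmult_lt_0_compat|]; lra).
  assert (Hle : Rabs (A - B) <= r * m * e).
  { assert (0 <= m * e) by (apply Rmult_le_pos; lra). nra. }
  destruct (quad_char_bounds _ _ Ha Hle) as [Hlo Hup].
  assert (Hmin : A + B = 2 * Rmin A B + Rabs (A - B)).
  { unfold Rmin. destruct (Rle_dec A B).
    - rewrite Rabs_left1 by lra. ring.
    - rewrite Rabs_right by lra. ring. }
  rewrite Hmin. split; lra.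
Qed.

Lemma holder_quotient_bound fa fs u d : 0 <= u <= d -> 0 < d ->
  (u = 0 -> fa = fs) -> fs <= fa ->
  0 <= (fa - fs) / rt N u /\
  forall K, (fa - fs) / rt N u <= K -> fa - fs <= K * rt N d.
Proof.
  intros Hu Hd Hz Hle.
  destruct (Req_dec u 0) as [E|E].
  - rewrite E, rt0. unfold Rdiv. rewrite Rinv_0, Rmult_0_r. split; [lra|].
    intros K HK. rewrite (Hz E), Rminus_diag. pose proof (rt_ge0 N d). nra.
  - pose proof (rt_pos N u ltac:(lra)). pose proof (rt_mono N u d HN ltac:(lra)).
    assert (Hq : 0 <= (fa - fs) / rt N u)
      by (apply Rmult_le_pos; [lra | left; apply Rinv_0_lt_compat; lra]).
    split; [exact Hq|]. intros K HK.
    assert (fa - fs <= K * rt N u).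
    { apply Rmult_le_compat_r with (r := rt N u) in HK; [|lra].
      unfold Rdiv in HK. rewrite Rmult_assoc, Rinv_l in HK; lra. }
    nra.
Qed.

Lemma charR_at_minimizer x q j xs : (2 <= j <= q)%nat -> 0 < x j - x (j - 1)%nat ->
  x (j - 1)%nat <= xs <= x j -> f xs <= f (x (j - 1)%nat) -> f xs <= f (x j) ->
  Rpower 2 (1 - / INR N) * Kj N f x xs j
    + sqrt (Rpower 4 (1 - / INR N) * Kj N f x xs j ^ 2 - Mj N f x j ^ 2)
    <= r * muj N xi f x q j ->
  Mj N f x j ^ 2 <= Rpower 4 (1 - / INR N) * Kj N f x xs j ^ 2 ->
  -2 * f xs <= charR N r xi f x q j.
Proof.
  intros Hj Hd Hxs HA HB Hmu HMK.
  destruct (root_exponent_factor N HN) as [Hs H4].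
  set (s := Rpower 2 (1 - / INR N)) in *. rewrite H4 in Hmu, HMK.
  set (d := x j - x (j - 1)%nat) in *.
  set (dl := rt N d). assert (Hdl : 0 < dl) by (apply rt_pos; auto).
  set (K := Kj N f x xs j) in *. set (M := Mj N f x j) in *.
  (* both endpoint values exceed [f xs] by at most [K dl] *)
  destruct (holder_quotient_bound (f (x (j - 1)%nat)) (f xs) (xs - x (j - 1)%nat) d
     ltac:(unfold d; lra) Hd ltac:(intros E; f_equal; lra) HA) as [K1 HK1].
  destruct (holder_quotient_bound (f (x j)) (f xs) (x j - xs) d
     ltac:(unfold d; lra) Hd ltac:(intros E; f_equal; lra) HB) as [_ HK2].
  assert (HA' : f (x (j - 1)%nat) - f xs <= K * dl) by (apply HK1, Rmax_l).
  assert (HB' : f (x j) - f xs <= K * dl) by (apply HK2, Rmax_r).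
  assert (HK0 : 0 <= K) by (eapply Rle_trans; [apply K1 | apply Rmax_l]).
  set (D := f (x j) - f (x (j - 1)%nat)).
  assert (HD2 : D ^ 2 = M ^ 2 * dl ^ 2).
  { assert (HM : Rabs D = M * dl).
    { unfold M, Mj. fold d dl. unfold Rdiv. rewrite Rmult_assoc, Rinv_l, Rmult_1_r by lra.
      unfold D. rewrite <- Rabs_Ropp. f_equal; ring. }
    replace (D ^ 2) with (Rsqr D) by (unfold Rsqr; ring).
    rewrite Rsqr_abs, HM. unfold Rsqr. ring. }
  set (m := muj N xi f x q j) in *. assert (Hm : 0 < m) by apply muj_pos.
  assert (Ha : 0 < r * m * dl)
    by (apply Rmult_lt_0_compat; [apply Rmult_lt_0_compat|]; lra).
  pose proof (reliability_bound (r * m * dl) dl s K M Hdl HK0 Hs HMK Ha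
    ltac:(rewrite (Rmult_comm (r * m)); apply Rmult_le_compat_l; lra)) as Hrel.
  unfold charR. fold m d dl D. rewrite HD2. lra.
Qed.

Variable H : R.
Hypothesis Hholder : forall x1 x2, 0 <= x1 <= 1 -> 0 <= x2 <= 1 ->
  Rabs (f x1 - f x2) <= H * rt N (Rabs (x1 - x2)).

Lemma holder_const_nonneg : 0 <= H.
Proof.
  pose proof (Hholder 1 0 ltac:(lra) ltac:(lra)) as H10.
  rewrite Rminus_0_r, Rabs_R1 in H10.
  pose proof (rt_pos N 1 ltac:(lra)). pose proof (Rabs_pos (f 1 - f 0)). nra.
Qed.

Lemma holder_within a b z : 0 <= a <= 1 -> 0 <= b <= 1 -> Rabs (a - b) <= z ->
  Rabs (f a - f b) <= H * rt N z.
Proof.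
  intros Ha Hb Hz. eapply Rle_trans; [apply Hholder; auto|].
  apply Rmult_le_compat_l; [apply holder_const_nonneg|].
  apply rt_mono; [exact HN | split; [apply Rabs_pos | exact Hz]].
Qed.

(* On an ordered configuration in [0,1], every estimate [mu_j] is bounded
   by the constant [max(H, xi)]: the slopes are bounded by [H], and so are
   [lambda_j] and [gamma_j]. *)
Lemma muj_le_bound x q j : ordered01 x q -> (2 <= j <= q)%nat ->
  muj N xi f x q j <= Rmax H xi.
Proof.
  intros Hx Hj. pose proof holder_const_nonneg as H0.
  assert (Hsl : forall i, In i (idx q) -> slope N f x i <= H).
  { intros i Hi. apply in_seq in Hi. destruct (Hx i ltac:(lia)) as (Hd & Hi1 & Hi0).
    unfold slope. pose proof (rt_pos N _ Hd).
    apply Rmult_le_reg_r with (rt N (x i - x (i - 1)%nat)); auto.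
    unfold Rdiv. rewrite Rmult_assoc, Rinv_l, Rmult_1_r by lra.
    rewrite <- (Rabs_right (x i - x (i - 1)%nat)) by lra. apply Hholder; auto. }
  assert (Hall : mu_all N f x q <= H).
  { apply maxl_le; auto. intros y Hy. apply in_map_iff in Hy.
    destruct Hy as (i & <- & Hi). auto. }
  assert (Hlam : lam N f x q j <= H).
  { apply maxl_le; auto. intros y Hy. apply in_map_iff in Hy.
    destruct Hy as (i & <- & Hi). apply filter_In in Hi. apply Hsl; tauto. }
  assert (Hgam : gam N f x q j <= H).
  { (* [gamma_j = mu * (d_j / Xmax)^(1/N) <= mu] since [d_j <= Xmax] *)
    unfold gam. destruct (Hx j Hj) as (Hd & _).
    assert (Hin : x j - x (j - 1)%nat <= Xmax x q).
    { apply maxl_ge, in_map_iff. exists j. split; auto. apply in_seq; lia. }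
    pose proof (rt_mono N _ _ HN (conj (Rlt_le _ _ Hd) Hin)).
    pose proof (rt_pos N _ Hd).
    pose proof (maxl_ge0 (map (slope N f x) (idx q))) as Hmu0.
    apply Rle_trans with (mu_all N f x q); [|exact Hall].
    unfold Rdiv. rewrite Rmult_assoc.
    assert (rt N (x j - x (j - 1)%nat) * / rt N (Xmax x q) <= 1).
    { apply Rmult_le_reg_r with (rt N (Xmax x q)); [lra|].
      rewrite Rmult_assoc, Rinv_l by lra. lra. }
    assert (0 <= rt N (x j - x (j - 1)%nat) * / rt N (Xmax x q))
      by (apply Rmult_le_pos; [lra | left; apply Rinv_0_lt_compat; lra]).
    unfold mu_all in *. nra. }
  unfold muj. apply Rmax_lub; [apply Rmax_lub; eapply Rle_trans; eauto; apply Rmax_l | apply Rmax_r].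
Qed.

Lemma charR_le_near x q j w z : ordered01 x q -> (2 <= j <= q)%nat -> 0 <= w <= 1 ->
  Rabs (x j - w) <= z -> Rabs (x (j - 1)%nat - w) <= z -> x j - x (j - 1)%nat <= z ->
  charR N r xi f x q j <= -2 * f w + (r * Rmax H xi + 2 * H) * rt N z.
Proof.
  intros Hx Hj Hw Hzj Hzj1 Hd.
  destruct (Hx j Hj) as (Hpos & Hj01 & Hj101).
  destruct (charR_bounds x q j Hj Hpos) as [_ Hup].
  pose proof (muj_le_bound x q j Hx Hj) as Hm. pose proof (muj_pos x q j).
  pose proof (rt_mono N _ _ HN (conj (Rlt_le _ _ Hpos) Hd)) as Hrt.
  pose proof (rt_ge0 N (x j - x (j - 1)%nat)).
  assert (r * muj N xi f x q j * rt N (x j - x (j - 1)%nat) <= r * Rmax H xi * rt N z).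
  { apply Rmult_le_compat; [apply Rmult_le_pos; lra | auto | apply Rmult_le_compat_l; lra | auto]. }
  pose proof (holder_within _ _ _ Hj01 Hw Hzj) as Fj.
  pose proof (holder_within _ _ _ Hj101 Hw Hzj1) as Fj1.
  apply Rabs_le_between in Fj, Fj1.
  assert (Rmin (f (x j)) (f (x (j - 1)%nat)) >= f w - H * rt N z)
    by (unfold Rmin; destruct (Rle_dec _ _); lra).
  lra.
Qed.

End Characteristic.

Section Run.

Context {f : R -> R} {N : nat} {r xi : R} {xt : nat -> R}
  {q p : nat -> nat} {xs : nat -> nat -> R} {t : nat -> nat -> nat}.
Hypothesis HN : (1 <= N)%nat.
Hypothesis Hr : 1 < r.
Hypothesis Hxi : 0 < xi.
Hypothesis Hrun : PLT_run f N r xi xt q p xs t.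

Lemma q_step l : (1 <= l)%nat -> q (S l) = (q l + p (S l))%nat /\ (1 <= p (S l))%nat.
Proof.
  intros Hl. destruct Hrun as (_ & _ & _ & _ & Hstep).
  destruct (Hstep l Hl) as (_ & _ & _ & Hp & _ & _ & _ & _ & _ & Hq). lia.
Qed.

Lemma q_mono l l' : (1 <= l <= l')%nat -> (q l + (l' - l) <= q l')%nat.
Proof.
  intros [Hl Hll']. induction Hll' as [|l' Hll' IH]; [lia|].
  destruct (q_step l' ltac:(lia)). lia.
Qed.

Lemma trial_decomp k : (q 1 < k)%nat ->
  exists l j, (1 <= l)%nat /\ (1 <= j <= p (S l))%nat /\ k = (q l + j)%nat.
Proof.
  intros Hk.
  assert (Hdec : forall n, (q 1 < k <= q (S n))%nat ->
    exists l j, (1 <= l)%nat /\ (1 <= j <= p (S l))%nat /\ k = (q l + j)%nat).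
  { induction n as [|n IH]; intros Hn; [lia|].
    destruct (Nat.le_gt_cases k (q (S n))) as [Hle|Hgt]; [apply IH; lia|].
    destruct (q_step (S n) ltac:(lia)).
    exists (S n), (k - q (S n))%nat. lia. }
  apply (Hdec k). pose proof (q_mono 1 (S k) ltac:(lia)). lia.
Qed.

Lemma xs_lt l i i' : (1 <= l)%nat -> (1 <= i)%nat -> (i < i')%nat -> (i' <= q l)%nat ->
  xs l i < xs l i'.
Proof.
  intros Hl Hi Hii Hi'. destruct Hrun as (_ & _ & _ & _ & Hstep).
  destruct (Hstep l Hl) as (Hs & _).
  induction Hii as [|i' Hii IH]; [apply Hs; lia|].
  eapply Rlt_trans; [apply IH; lia | apply Hs; lia].
Qed.

Lemma xs_le l i i' : (1 <= l)%nat -> (1 <= i)%nat -> (i <= i')%nat -> (i' <= q l)%nat ->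
  xs l i <= xs l i'.
Proof.
  intros Hl Hi Hii Hi'. destruct (Nat.eq_dec i i') as [<-|Hne]; [lra|].
  left; apply xs_lt; auto; lia.
Qed.

Definition chosen_len l j := xs l (t l j) - xs l (t l j - 1)%nat.

Lemma new_point_in l j : (1 <= l)%nat -> (1 <= j <= p (S l))%nat ->
  (2 <= t l j <= q l)%nat /\ 0 < chosen_len l j /\
  xs l (t l j - 1)%nat + (1 - / r) / 2 * chosen_len l j <= xt (q l + j)%nat /\
  xt (q l + j)%nat <= xs l (t l j) - (1 - / r) / 2 * chosen_len l j.
Proof.
  intros Hl Hj. pose proof Hrun as (_ & _ & _ & _ & Hstep).
  destruct (Hstep l Hl) as (_ & _ & _ & _ & Ht & _ & _ & _ & Hnew & _).
  pose proof (Ht j Hj) as Htj. rewrite (Hnew j Hj).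
  assert (Hd : 0 < chosen_len l j).
  { unfold chosen_len. pose proof (xs_lt l (t l j - 1) (t l j) Hl ltac:(lia) ltac:(lia) ltac:(lia)).
    lra. }
  destruct (newpt_margin N r xi f HN Hr Hxi (xs l) (q l) (t l j) Htj Hd); auto.
Qed.

Lemma margin_pos : 0 < (1 - / r) / 2.
Proof.
  assert (/ r < 1) by (rewrite <- Rinv_1; apply Rinv_lt_contravar; lra). lra.
Qed.

Lemma trials_in01 k : (1 <= k)%nat -> 0 <= xt k <= 1.
Proof.
  induction k as [k IH] using lt_wf_ind. intros Hk.
  pose proof Hrun as (Hq1 & Hx1 & Hx2 & Hinit & Hstep).
  destruct (Nat.le_gt_cases k (q 1%nat)) as [Hle|Hgt].
  - destruct (Nat.eq_dec k 1) as [->|]; [rewrite Hx1; lra|].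
    destruct (Nat.eq_dec k 2) as [->|]; [rewrite Hx2; lra|].
    pose proof (Hinit k ltac:(lia)); lra.
  - destruct (trial_decomp k Hgt) as (l & j & Hl & Hj & ->).
    destruct (new_point_in l j Hl Hj) as (Htj & Hd & M1 & M2).
    destruct (Hstep l Hl) as (_ & Hex & _).
    (* the endpoints are earlier trial points *)
    destruct (Hex (t l j - 1)%nat ltac:(lia)) as (ka & Hka & Ea).
    destruct (Hex (t l j) ltac:(lia)) as (kb & Hkb & Eb).
    assert (0 <= xs l (t l j - 1)%nat <= 1) by (rewrite Ea; apply IH; lia).
    assert (0 <= xs l (t l j) <= 1) by (rewrite Eb; apply IH; lia).
    pose proof margin_pos.
    assert (0 <= (1 - / r) / 2 * chosen_len l j) by (apply Rmult_le_pos; lra).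
    lra.
Qed.

Lemma config_ordered l : (1 <= l)%nat -> ordered01 (xs l) (q l).
Proof.
  intros Hl i Hi. pose proof Hrun as (_ & _ & _ & _ & Hstep).
  destruct (Hstep l Hl) as (_ & Hex & _).
  assert (Hin : forall i, (1 <= i <= q l)%nat -> 0 <= xs l i <= 1).
  { intros i' Hi'. destruct (Hex i' Hi') as (k & Hk & ->). apply trials_in01; lia. }
  pose proof (xs_lt l (i - 1) i Hl ltac:(lia) ltac:(lia) ltac:(lia)).
  split; [lra | split; apply Hin; lia].
Qed.

(* Since [0] is a trial point, it is the smallest one at every iteration;
   hence a positive trial point is never the first ordered point. *)
Lemma positive_point_index l i : (1 <= l)%nat -> (1 <= i <= q l)%nat -> 0 < xs l i ->
  (2 <= i)%nat.
Proof.
  intros Hl Hi Hpos.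
  pose proof Hrun as (Hq1 & Hx1 & _ & _ & Hstep).
  destruct (Hstep l Hl) as (_ & _ & Hex2 & _).
  pose proof (q_mono 1 l ltac:(lia)).
  destruct (Hex2 1%nat ltac:(lia)) as (i0 & Hi0 & E0). rewrite Hx1 in E0.
  destruct (Nat.le_gt_cases i 1) as [Hi1|]; [|lia].
  assert (i = 1%nat) as -> by lia.
  pose proof (xs_le l 1 i0 Hl ltac:(lia) ltac:(lia) ltac:(lia)). lra.
Qed.

(* A new point of iteration [l] keeps distance at least [c] times the length
   of its interval from every earlier trial point: the old points are outside
   the interval, and the other new points of iteration [l] lie in other
   intervals. *)
Lemma separation l j k : (1 <= l)%nat -> (1 <= j <= p (S l))%nat -> (1 <= k < q l + j)%nat ->
  (1 - / r) / 2 * chosen_len l j <= Rabs (xt k - xt (q l + j)%nat).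
Proof.
  intros Hl Hj Hk.
  pose proof Hrun as (_ & _ & _ & _ & Hstep).
  destruct (Hstep l Hl) as (_ & _ & Hex2 & _ & _ & Hinj & _).
  destruct (new_point_in l j Hl Hj) as (Htj & Hd & M1 & M2).
  pose proof margin_pos.
  assert (0 <= (1 - / r) / 2 * chosen_len l j) by (apply Rmult_le_pos; lra).
  assert (Houtside : forall z, z <= xs l (t l j - 1)%nat \/ xs l (t l j) <= z ->
            (1 - / r) / 2 * chosen_len l j <= Rabs (z - xt (q l + j)%nat)).
  { intros z [Hz|Hz]; [rewrite Rabs_left1 | rewrite Rabs_right]; lra. }
  destruct (Nat.le_gt_cases k (q l)) as [Hold|Hnew].
  - destruct (Hex2 k ltac:(lia)) as (i & Hi & <-). apply Houtside.
    destruct (Nat.le_gt_cases i (t l j - 1)).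
    + left. apply xs_le; auto; lia.
    + right. apply xs_le; auto; lia.
  - set (j1 := (k - q l)%nat). replace k with (q l + j1)%nat by (unfold j1; lia).
    assert (Hj1 : (1 <= j1 <= p (S l))%nat) by (unfold j1; lia).
    destruct (new_point_in l j1 Hl Hj1) as (Ht1 & Hd1 & M1' & M2').
    assert (0 <= (1 - / r) / 2 * chosen_len l j1) by (apply Rmult_le_pos; lra).
    assert (t l j1 <> t l j) by (intros E; apply Hinj in E; unfold j1 in *; lia).
    apply Houtside. destruct (Nat.le_gt_cases (t l j1) (t l j - 1)).
    + left. pose proof (xs_le l (t l j1) (t l j - 1) Hl ltac:(lia) ltac:(lia) ltac:(lia)). lra.
    + right. pose proof (xs_le l (t l j) (t l j1 - 1) Hl ltac:(lia) ltac:(lia) ltac:(lia)). lra.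
Qed.

Lemma new_point_fresh l j k : (1 <= l)%nat -> (1 <= j <= p (S l))%nat ->
  (1 <= k < q l + j)%nat -> xt k <> xt (q l + j)%nat.
Proof.
  intros Hl Hj Hk E. pose proof (separation l j k Hl Hj Hk) as Hsep.
  rewrite E, Rminus_diag, Rabs_R0 in Hsep.
  destruct (new_point_in l j Hl Hj) as (_ & Hd & _).
  pose proof margin_pos.
  assert (0 < (1 - / r) / 2 * chosen_len l j) by (apply Rmult_lt_0_compat; auto). lra.
Qed.

Lemma new_point_pos l j : (1 <= l)%nat -> (1 <= j <= p (S l))%nat -> 0 < xt (q l + j)%nat.
Proof.
  intros Hl Hj. destruct (new_point_in l j Hl Hj) as (Htj & Hd & M1 & _).
  pose proof (config_ordered l Hl (t l j) Htj) as (_ & _ & H0 & _).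
  pose proof margin_pos.
  assert (0 < (1 - / r) / 2 * chosen_len l j) by (apply Rmult_lt_0_compat; auto). lra.
Qed.

Lemma first_choice_max l j : (1 <= l)%nat -> (2 <= j <= q l)%nat ->
  charR N r xi f (xs l) (q l) j <= charR N r xi f (xs l) (q l) (t l 1%nat).
Proof.
  intros Hl Hj. pose proof Hrun as (_ & _ & _ & _ & Hstep).
  destruct (Hstep l Hl) as (_ & _ & _ & Hp & _ & _ & Hord & Hmax & _).
  destruct (classic (exists k, (1 <= k <= p (S l))%nat /\ t l k = j)) as [[k [Hk <-]]|Hno].
  - destruct (Nat.eq_dec k 1) as [->|]; [lra|]. apply Hord; lia.
  - apply Hmax; [lia | exact Hj |]. intros k Hk E. apply Hno. eauto.
Qed.

Lemma above_chosen_is_chosen l i k : (1 <= l)%nat -> (2 <= i <= q l)%nat ->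
  (1 <= k <= p (S l))%nat ->
  charR N r xi f (xs l) (q l) (t l k) < charR N r xi f (xs l) (q l) i ->
  exists k', (1 <= k' <= p (S l))%nat /\ t l k' = i.
Proof.
  intros Hl Hi Hk Hlt. pose proof Hrun as (_ & _ & _ & _ & Hstep).
  destruct (Hstep l Hl) as (_ & _ & _ & _ & _ & _ & _ & Hmax & _).
  apply NNPP. intros Hno.
  assert (charR N r xi f (xs l) (q l) i <= charR N r xi f (xs l) (q l) (t l k)); [|lra].
  apply Hmax; auto. intros k' Hk' E. apply Hno. eauto.
Qed.

(* For every [L > 0], from some trial on all subdivided intervals are shorter
   than [L]: otherwise the new points of infinitely many intervals of length
   [>= L] would be pairwise [c L]-separated in [0,1]. *)
Lemma short_choices_eventually L : 0 < L ->
  exists K0, forall l j, (1 <= l)%nat -> (1 <= j <= p (S l))%nat ->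
    (K0 <= q l + j)%nat -> chosen_len l j < L.
Proof.
  intros HL. apply NNPP. intros Hno.
  set (long := fun k => exists l j, (1 <= l)%nat /\ (1 <= j <= p (S l))%nat /\
                 k = (q l + j)%nat /\ L <= chosen_len l j).
  assert (Hinf : forall n, exists k, (n <= k)%nat /\ long k).
  { intros n. apply NNPP. intros Hn. apply Hno. exists n. intros l j Hl Hj Hk.
    apply Rnot_le_lt. intros HL'. apply Hn. exists (q l + j)%nat. split; auto.
    exists l, j. auto. }
  destruct (increasing_witnesses _ Hinf) as (s & Hlong & Hinc).
  pose proof margin_pos.
  apply (no_separated_sequence ((1 - / r) / 2 * L) (fun m => xt (s m))).
  - apply Rmult_lt_0_compat; auto.
  - intros m. destruct (Hlong m) as (l & j & _ & Hj & E & _). apply trials_in01. lia.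
  - intros m m' Hmm. destruct (Hlong m') as (l & j & Hl & Hj & E & HLL).
    pose proof (Hinc m m' Hmm). destruct (Hlong m) as (l0 & j0 & _ & Hj0 & E0 & _).
    simpl. rewrite E.
    eapply Rle_trans; [|apply (separation l j (s m) Hl Hj ltac:(lia))].
    apply Rmult_le_compat_l; lra.
Qed.

(* Take first new points [x^(q(s m)+1)] of [M] earlier iterations with
   [-2 f(x^(q(s m)+1)) > R(t_j)] for a chosen interval [t_j] of iteration
   [ls].  Each is the right endpoint of an interval of characteristic above
   [R(t_j)], which is therefore chosen; the points being distinct, so are
   these intervals, hence [M <= p(ls+1)]. *)
Lemma choices_exceed ls j (s : nat -> nat) M : (1 <= ls)%nat -> (1 <= j <= p (S ls))%nat ->
  (forall m, (m < M)%nat -> (1 <= s m < ls)%nat /\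
     charR N r xi f (xs ls) (q ls) (t ls j) < -2 * f (xt (q (s m) + 1)%nat)) ->
  (forall m m', (m < m' < M)%nat -> (s m < s m')%nat) ->
  (M <= p (S ls))%nat.
Proof.
  intros Hls Hj Hs Hinc.
  pose proof Hrun as (_ & _ & _ & _ & Hstep).
  destruct (Hstep ls Hls) as (_ & _ & Hex2 & _).
  apply (pigeon M (p (S ls)) (fun m k => xs ls (t ls k) = xt (q (s m) + 1)%nat)).
  - intros m Hm. destruct (Hs m Hm) as (Hsm & Hlow).
    destruct (q_step (s m) ltac:(lia)) as (Hq & Hp).
    pose proof (q_mono (S (s m)) ls ltac:(lia)).
    (* the new point is the [i]-th ordered point at iteration [ls], [i >= 2] *)
    destruct (Hex2 (q (s m) + 1)%nat ltac:(lia)) as (i & Hi & Ei).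
    pose proof (new_point_pos (s m) 1 ltac:(lia) ltac:(lia)) as Hpos.
    assert (Hi2 : (2 <= i)%nat) by (apply (positive_point_index ls i); auto; lra).
    destruct (config_ordered ls Hls i ltac:(lia)) as (Hd & _).
    destruct (charR_bounds N r xi f HN Hr Hxi (xs ls) (q ls) i ltac:(lia) Hd) as [Hlo _].
    assert (Rmin (f (xs ls i)) (f (xs ls (i - 1)%nat)) <= f (xs ls i)) by apply Rmin_l.
    destruct (above_chosen_is_chosen ls i j Hls ltac:(lia) Hj) as (k & Hk & Ek).
    + rewrite Ei in *. lra.
    + exists k. split; auto. rewrite Ek. exact Ei.
  -
    assert (Hdist : forall m m', (m < m' < M)%nat ->
              xt (q (s m) + 1)%nat <> xt (q (s m') + 1)%nat).
    { intros m m' Hmm'. pose proof (Hinc m m' Hmm').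
      destruct (Hs m ltac:(lia)) as (Hsm & _). destruct (Hs m' ltac:(lia)) as (Hsm' & _).
      destruct (q_step (s m') ltac:(lia)).
      pose proof (q_mono (s m) (s m') ltac:(lia)).
      apply (new_point_fresh (s m') 1 (q (s m) + 1)); lia. }
    intros m m' k Hm Hm' E1 E2. rewrite E1 in E2.
    destruct (Nat.lt_total m m') as [Hlt|[Heq|Hgt]]; auto; exfalso.
    + apply (Hdist m m'); auto.
    + apply (Hdist m' m); auto.
Qed.

Context {H : R}.
Hypothesis Hholder : forall x1 x2, 0 <= x1 <= 1 -> 0 <= x2 <= 1 ->
  Rabs (f x1 - f x2) <= H * rt N (Rabs (x1 - x2)).

(* Arbitrarily late iterations subdivide an interval near a limit point [y]
   of the trials; as such intervals are short, their characteristic is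
   close to [-2 f(y)] or below. *)
Lemma low_char_near_limit y eps : limit_point xt y -> 0 <= y <= 1 -> 0 < eps ->
  forall n, exists l j, (n <= l)%nat /\ (1 <= l)%nat /\ (1 <= j <= p (S l))%nat /\
    charR N r xi f (xs l) (q l) (t l j) < -2 * f y + eps.
Proof.
  intros Hlp Hy Heps n.
  destruct (rt_small N (r * Rmax H xi + 2 * H) eps HN Heps) as (L0 & HL0 & Hsmall).
  destruct (short_choices_eventually (L0 / 2) ltac:(lra)) as (K0 & Hshort).
  destruct (Hlp (L0 / 2) ltac:(lra) (Nat.max K0 (Nat.max (q n + 1) (q 1%nat + 1))))
    as (k & Hkn & Hk1 & Hky).
  destruct (trial_decomp k ltac:(lia)) as (l & j & Hl & Hj & Ek).
  assert (Hln : (n <= l)%nat).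
  { destruct (Nat.le_gt_cases n l) as [|Hlt]; auto.
    pose proof (q_mono (S l) n ltac:(lia)). destruct (q_step l Hl). lia. }
  exists l, j. repeat split; auto; try lia.
  destruct (new_point_in l j Hl Hj) as (Htj & Hd & M1 & M2). rewrite <- Ek in M1, M2.
  assert (Hlen : chosen_len l j < L0 / 2) by (apply Hshort; auto; lia).
  unfold chosen_len in *. pose proof margin_pos.
  assert (0 <= (1 - / r) / 2 * (xs l (t l j) - xs l (t l j - 1)%nat))
    by (apply Rmult_le_pos; lra).
  apply Rabs_def2 in Hky.
  eapply Rle_lt_trans;
    [apply (charR_le_near N r xi f HN Hr Hxi H Hholder (xs l) (q l) (t l j) y L0);
       [apply config_ordered | | | | |]; auto; try (apply Rabs_le); lra|].
  specialize (Hsmall L0 ltac:(lra)). lra.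
Qed.

(* The hypotheses of Theorem 2 about the interval containing a minimizer. *)
Context {xstar : R} {jf : nat -> nat}.
Hypothesis Hmin : is_global_min f xstar.
Hypothesis Hjf : forall l, (1 <= l)%nat ->
  (2 <= jf l <= q l)%nat /\ xs l (jf l - 1)%nat <= xstar <= xs l (jf l).
Hypothesis Hcond : forall L, exists l, (L <= l)%nat /\ (1 <= l)%nat /\
  Mj N f (xs l) (jf l) ^ 2 <= Rpower 4 (1 - / INR N) * Kj N f (xs l) xstar (jf l) ^ 2 /\
  Rpower 2 (1 - / INR N) * Kj N f (xs l) xstar (jf l)
    + sqrt (Rpower 4 (1 - / INR N) * Kj N f (xs l) xstar (jf l) ^ 2 - Mj N f (xs l) (jf l) ^ 2)
    <= r * muj N xi f (xs l) (q l) (jf l).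

(* At the infinitely many iterations where the condition of Theorem 2 holds,
   the best characteristic is at least [-2 f(xstar)], so the first new point
   (late enough, in a short interval) has value close to [f(xstar)] or below. *)
Lemma low_first_trials eps : 0 < eps ->
  forall n, exists l, (n <= l)%nat /\ (1 <= l)%nat /\ f (xt (q l + 1)%nat) < f xstar + eps.
Proof.
  intros Heps n.
  destruct (rt_small N (r * Rmax H xi + 2 * H) (2 * eps) HN ltac:(lra)) as (L & HL & Hsmall).
  destruct (short_choices_eventually L HL) as (K0 & Hshort).
  destruct (Hcond (Nat.max n (Nat.max K0 1))) as (l & Hln & Hl & HMK & Hmu).
  exists l. repeat split; auto; try lia.
  destruct Hmin as [_ Hfmin].
  destruct (Hjf l Hl) as (Hj & Hxj).
  destruct (config_ordered l Hl (jf l) Hj) as (Hdj & Hb01 & Ha01).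
  (* the interval containing the minimizer has characteristic >= -2 f(xstar) ... *)
  pose proof (charR_at_minimizer N r xi f HN Hr Hxi (xs l) (q l) (jf l) xstar Hj Hdj Hxj
    (Hfmin _ Ha01) (Hfmin _ Hb01) Hmu HMK) as Hjlow.
  (* ... hence so has the first chosen interval *)
  pose proof (first_choice_max l (jf l) Hl Hj) as Hbest.
  destruct (q_step l Hl) as (_ & Hp1).
  destruct (new_point_in l 1 Hl ltac:(lia)) as (Ht1 & Hd & M1 & M2).
  pose proof (q_mono 1 l ltac:(lia)).
  assert (Hlen : chosen_len l 1 < L) by (apply Hshort; auto; lia).
  unfold chosen_len in *. pose proof margin_pos.
  assert (0 <= (1 - / r) / 2 * (xs l (t l 1%nat) - xs l (t l 1%nat - 1)%nat))
    by (apply Rmult_le_pos; lra).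
  pose proof (trials_in01 (q l + 1) ltac:(lia)).
  pose proof (charR_le_near N r xi f HN Hr Hxi H Hholder (xs l) (q l) (t l 1%nat)
    (xt (q l + 1)%nat) L (config_ordered l Hl) Ht1 ltac:(assumption)
    ltac:(apply Rabs_le; lra) ltac:(apply Rabs_le; lra) ltac:(lra)) as Hnear.
  specialize (Hsmall L ltac:(lra)). lra.
Qed.

End Run.

(* If [f(y) = f(xstar) + eps] with
   [eps > 0], pick [Q + 1] iterations whose first new point has value below
   [f(xstar) + eps/2], and a later iteration choosing an interval of
   characteristic below [-2 f(y) + eps = -2 f(xstar) - eps]; at that iteration
   the intervals of all [Q + 1] points must be chosen, exceeding [p <= Q]. *)
Theorem corollary1
  (f : R -> R) (N : nat) (r xi H : R) (Q : nat)
  (xt : nat -> R) (q p : nat -> nat) (xs : nat -> nat -> R) (t : nat -> nat -> nat)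
  (xstar : R) (jf : nat -> nat) :
  (1 <= N)%nat -> 1 < r -> 0 < xi ->
  (forall x1 x2, 0 <= x1 <= 1 -> 0 <= x2 <= 1 ->
     Rabs (f x1 - f x2) <= H * rt N (Rabs (x1 - x2))) ->
  PLT_run f N r xi xt q p xs t ->
  (forall l, (1 < l)%nat -> (p l <= Q)%nat) ->
  is_global_min f xstar ->
  (forall l, (1 <= l)%nat ->
     (2 <= jf l <= q l)%nat /\ xs l (jf l - 1)%nat <= xstar <= xs l (jf l)) ->
  (forall L, exists l, (L <= l)%nat /\ (1 <= l)%nat /\
     Mj N f (xs l) (jf l) ^ 2
       <= Rpower 4 (1 - / INR N) * Kj N f (xs l) xstar (jf l) ^ 2 /\
     Rpower 2 (1 - / INR N) * Kj N f (xs l) xstar (jf l)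
       + sqrt (Rpower 4 (1 - / INR N) * Kj N f (xs l) xstar (jf l) ^ 2
               - Mj N f (xs l) (jf l) ^ 2)
       <= r * muj N xi f (xs l) (q l) (jf l)) ->
  forall y, limit_point xt y -> is_global_min f y.
Proof.
  intros HN Hr Hxi Hholder Hrun HQ Hmin Hjf Hcond y Hlp.
  pose proof (limit_point_in01 xt y (trials_in01 HN Hr Hxi Hrun) Hlp) as Hy.
  split; [exact Hy|]. intros x Hx.
  apply Rle_trans with (f xstar); [|apply (proj2 Hmin x Hx)].
  apply Rnot_lt_le. intros Hgt. set (eps := f y - f xstar).
  destruct (increasing_witnesses
              (fun l => (1 <= l)%nat /\ f (xt (q l + 1)%nat) < f xstar + eps / 2))
    as (s & Hlow & Hinc).
  { intros n. destruct (low_first_trials HN Hr Hxi Hrun Hholder Hmin Hjf Hcond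
                          (eps / 2) ltac:(unfold eps; lra) n) as (l & Hnl & Hl).
    eauto. }
  destruct (low_char_near_limit HN Hr Hxi Hrun Hholder y eps Hlp Hy
              ltac:(unfold eps; lra) (S (s Q))) as (ls & j & Hls & Hls1 & Hj & Hchar).
  assert (HSQ : (S Q <= p (S ls))%nat).
  { apply (choices_exceed HN Hr Hxi Hrun ls j s); auto.
    - intros m Hm. destruct (Hlow m) as (Hsm & Hfm).
      assert (s m <= s Q)%nat
        by (destruct (Nat.eq_dec m Q) as [->|]; [lia | apply Nat.lt_le_incl, Hinc; lia]).
      split; [lia | unfold eps in *; lra].
    - intros m m' Hmm'. apply Hinc. lia. }
  pose proof (HQ (S ls) ltac:(lia)). lia.
Qed.
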